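(* Let $a,b\in\mathbb{R}^n$ with $a\ll b$ and let $X=[a,b]=\{z\in\mathbb{R}^n: a\le z\le b\}$. Let $\{B_i\}_{i\in\mathbb{N}}$ be a sequence of experiments in $X$ (as in the context) and let $\succeq^*$ be a continuous preference on $X$. Then for each $k\in\mathbb{N}$ there exists a continuous preference $\succeq_k$ on $X$ that strongly rationalizes the choice function of order $k$ generated by $\succeq^*$, such that $\succeq_k\to X\times X$ (the relation of complete indifference) in the topology of closed convergence.
   Context: For $x,y\in\mathbb{R}^n$, $x\ge y$ means $x_i\ge y_i$ for all $i$ and $x\gg y$ means $x_i>y_i$ for all $i$. A preference on $X$ is a complete and transitive binary relation $\succeq\subseteq X\times X$; it is continuous if it is a closed subset of $X\times X$. A sequence of experiments is a sequence $\{B_i\}_{i\in\mathbb{N}}$ of unordered pairs $B_i=\{x_i,y_i\}\subseteq X$ such that $B=\bigcup_i B_i$ is dense in $X$ and for all $x,y\in B$ there is $k$ with $B_k=\{x,y\}$; set $\Sigma_k=\{B_1,\dots,B_k\}$. For a preference $\succeq$ and a finite set $A$, $c_{\succeq}(A)=\{x\in A: x\succeq y \text{ for all } y\in A\}$. The choice function of order $k$ generated by $\succeq^*$ is the map $B_i\mapsto c_{\succeq^*}(B_i)$ on $\Sigma_k$. A preference $\succeq_k$ strongly rationalizes a choice function $c$ on $\Sigma_k$ if $c(B_i)=c_{\succeq_k}(B_i)$ for all $B_i\in\Sigma_k$. Topology of closed convergence on closed subsets of $X\times X$: for a sequence $\mathcal{F}=\{F^n\}$ of closed sets, $\mathrm{Li}(\mathcal{F})$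 is the set of $(x,y)$ such that every neighborhood $V$ of $(x,y)$ meets $F^n$ for all sufficiently large $n$, and $\mathrm{Ls}(\mathcal{F})$ is the set of $(x,y)$ such that every neighborhood $V$ of $(x,y)$ meets $F^n$ for infinitely many $n$; $F^n\to F$ iff $\mathrm{Li}(\mathcal{F})=F=\mathrm{Ls}(\mathcal{F})$. *)

(* Points of R^n are row vectors 'rV[R]_n
   (with their canonical normed/topological structure); X*X carries
   the product topology. *)
From mathcomp Require Import all_boot all_order all_algebra.
From mathcomp Require Import all_classical all_reals all_analysis.
Set Implicit Arguments. Unset Strict Implicit. Unset Printing Implicit Defensive.
Import Order.TTheory GRing.Theory Num.Theory numFieldNormedType.Exports.
Local Open Scope classical_set_scope.
Local Open Scope ring_scope.

Section Defs.
Context {R : realType} {n : nat}.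
Notation V := 'rV[R]_n.

Definition vge (x y : V) : Prop := forall i : 'I_n, y ord0 i <= x ord0 i.
Definition vgg (x y : V) : Prop := forall i : 'I_n, y ord0 i < x ord0 i.

Definition box (a b : V) : set V := [set z | vge z a /\ vge b z].

Definition preference (X : set V) (P : set (V * V)) : Prop :=
  P `<=` X `*` X /\
  (forall x y, X x -> X y -> P (x, y) \/ P (y, x)) /\
  (forall x y z, P (x, y) -> P (y, z) -> P (x, z)).

Definition closed_in (S : set (V * V)) (F : set (V * V)) : Prop :=
  closure F `&` S `<=` F.

Definition continuous_preference (X : set V) (P : set (V * V)) : Prop :=
  preference X P /\ closed_in (X `*` X) P.

(* unordered pair B_i = {x_i, y_i} given by e i = (x_i, y_i) *)
Definition exp_pair (e : nat -> V * V) (i : nat) : set V :=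
  [set (e i).1; (e i).2].

Definition exp_union (e : nat -> V * V) : set V :=
  \bigcup_(i in setT) exp_pair e i.

Definition sequence_of_experiments (X : set V) (e : nat -> V * V) : Prop :=
  (forall i, exp_pair e i `<=` X) /\
  X `<=` closure (exp_union e) /\
  (forall x y, exp_union e x -> exp_union e y ->
     exists k, exp_pair e k = [set x; y]).

Definition choice (P : set (V * V)) (A : set V) : set V :=
  [set x | A x /\ forall y, A y -> P (x, y)].

(* P strongly rationalizes the choice function of order k generated by Pstar:
   Sigma_k = {B_i | i < k} (0-based indexing of the paper's B_1..B_k) *)
Definition strongly_rationalizes_order (e : nat -> V * V) (k : nat)
  (Pstar P : set (V * V)) : Prop :=
  forall i, (i < k)%N -> choice Pstar (exp_pair e i) = choice P (exp_pair e i).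

(* Kuratowski limits inside the space S = X x X *)
Definition Li (S : set (V * V)) (F : nat -> set (V * V)) : set (V * V) :=
  [set p | S p /\ forall U, nbhs p U ->
      \forall m \near \oo, (U `&` F m) !=set0].
Definition Ls (S : set (V * V)) (F : nat -> set (V * V)) : set (V * V) :=
  [set p | S p /\ forall U, nbhs p U ->
      forall N, exists2 m, (N <= m)%N & (U `&` F m) !=set0].

Definition closed_converges (S : set (V * V)) (F : nat -> set (V * V))
  (G : set (V * V)) : Prop := Li S F = G /\ Ls S F = G.

End Defs.

From Pilot Require Import Defs.
From mathcomp Require Import all_boot all_order all_algebra.
From mathcomp Require Import all_classical all_reals all_analysis.
From mathcomp Require Import zify ring lra.
Import Order.TTheory GRing.Theory Num.Theory numFieldNormedType.Exports.
Local Open Scope classical_set_scope.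
Local Open Scope ring_scope.

(* Represent the preference on the finitely many points of B_1, ..., B_k by
   its rank (the number of sample points weakly below), and extend this to a
   continuous utility on X as the upper envelope of tents of height rank(q)
   centred at the sample points q, with a radius below their separation.  The
   induced preference is continuous and agrees with the given one on Sigma_k.
   The radius also shrinks faster than 1 / ((k + 1) (#points + 1)), so for large k
   the tents cannot cover a segment of fixed length: every y in X can be moved
   slightly along a coordinate where a < b to a point of utility 0, the
   minimum, which puts pairs (x, y') of the k-th preference arbitrarily close
   to any (x, y).  Hence the preferences converge to X x X. *)

Section Tents.
Context {R : realType} {V : normedModType R}.

Definition tent (r h : R) (q z : V) : R := h * Num.max 0 (1 - `|z - q| / r).

Lemma tent_continuous r h q : continuous (tent r h q).
Proof.
have dist_cont : continuous (fun z : V => `|z - q|).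
  move=> z; apply: (continuous_comp (f := fun z => z - q)).
    by apply: (@continuousB _ _ _ id (fun=> q)); [exact: cvg_id | exact: cst_continuous].
  exact: norm_continuous.
have lin_cont : continuous (fun z : V => 1 - `|z - q| / r).
  move=> z; apply: (@continuousB R R^o _ (fun=> 1) (fun z => `|z - q| / r));
    first exact: cst_continuous.
  apply: (@continuousM R _ (fun z : V => `|z - q|) (fun=> r^-1));
    [exact: dist_cont | exact: cst_continuous].
have max_cont := max_fun_continuous (@cst_continuous _ _ (0 : R)) lin_cont.
move=> z; rewrite /tent.
by apply: (@continuousM R _ (fun=> h) (fun z => Num.max 0 (1 - `|z - q| / r)));
  [exact: cst_continuous | exact: max_cont].
Qed.

Lemma tent_center r h q : tent r h q q = h.
Proof. by rewrite /tent subrr normr0 mul0r subr0 (max_r ler01) mulr1. Qed.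

Lemma tent_far r h q z : 0 < r -> r <= `|z - q| -> tent r h q z = 0.
Proof.
by move=> r0 rz; rewrite /tent max_l ?mulr0 // subr_le0 ler_pdivlMr // mul1r.
Qed.

Definition tent_max (w : V -> R) (r : R) (s : seq V) (z : V) : R :=
  \big[Num.max/0]_(q <- s) tent r (w q) q z.

Lemma tent_max_continuous w r s : continuous (tent_max w r s).
Proof.
elim: s => [|q s IH].
  by rewrite /tent_max; under eq_fun do rewrite big_nil; exact: cst_continuous.
rewrite /tent_max; under eq_fun do rewrite big_cons.
exact: max_fun_continuous (tent_continuous _ _ _) IH.
Qed.

Lemma tent_max_ge0 w r s z : 0 <= tent_max w r s z.
Proof.
rewrite /tent_max; elim: s => [|q s IH]; rewrite ?big_nil ?big_cons //.
by rewrite le_max IH orbT.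
Qed.

Lemma tent_max_far w r s z : 0 < r -> (forall q, q \in s -> r <= `|z - q|) ->
  tent_max w r s z = 0.
Proof.
move=> r0 far; rewrite /tent_max big_seq.
by elim/big_ind: _ => [//|x y -> ->|q /far/tent_far->//]; rewrite maxxx.
Qed.

Lemma tent_max_at w r s p : 0 < r -> 0 <= w p -> p \in s ->
  (forall q, q \in s -> q != p -> r <= `|p - q|) -> tent_max w r s p = w p.
Proof.
move=> r0 wp0 ps sep; apply/le_anti/andP; split.
  rewrite /tent_max big_seq; apply: bigmax_le => // q qs.
  have [->|qp] := eqVneq q p; first by rewrite tent_center.
  by rewrite tent_far ?sep.
rewrite -{1}(tent_center r (w p) p) /tent_max.
exact: (le_bigmax_seq _ p predT (fun q => tent r (w q) q p)).
Qed.

Definition sep_radius (s : seq V) : R :=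
  \big[Num.min/1]_(p <- s) \big[Num.min/1]_(q <- s | q != p) `|p - q|.

Lemma sep_radius_gt0 s : 0 < sep_radius s.
Proof.
apply: lt_bigmin => // p _; apply: lt_bigmin => // q qp.
by rewrite normr_gt0 subr_eq0 eq_sym.
Qed.

Lemma sep_radius_le s p q : p \in s -> q \in s -> q != p ->
  sep_radius s <= `|p - q|.
Proof.
move=> ps qs qp.
apply: le_trans (ge_bigmin_seq 1 p predT
  (fun p => \big[Num.min/1]_(q <- s | q != p) `|p - q|) ps isT) _.
exact: (ge_bigmin_seq 1 q (fun q => q != p) (fun q => `|p - q|) qs qp).
Qed.

End Tents.

(* Pigeonhole: a point of s is within del of at most one grid point. *)
Lemma grid_point_far {R : realType} (s : seq R) (c h del : R) : 2 * del < h ->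
  exists2 j : nat, (j <= size s)%N & forall w, w \in s -> del <= `|c + j%:R * h - w|.
Proof.
move=> delh; pose t (j : nat) := c + j%:R * h.
apply: contrapT => /forallPNP no_far.
have close (j : 'I_(size s).+1) : exists i : 'I_(size s), `|t j - s`_i| < del.
  have [w ws] := (existsPNP _ _).2 (no_far j (ltn_ord j)).
  move/negP; rewrite -ltNge => near_w.
  by exists (Ordinal (etrans (index_mem w s) ws)); rewrite /= nth_index.
have [f f_close] := fin_all_exists close.
suff /leq_card : injective f by rewrite !card_ord ltnn.
move=> j1 j2 f12; apply/val_inj/eqP; apply: contraT => j12.
have tj12 : t j1 - t j2 = (j1%:R - j2%:R) * h by rewrite /t; ring.
have dist_ge : 1 <= `|j1%:R - j2%:R : R|.
  by apply: norm_intr_ge1; rewrite ?rpredB ?natr_int // subr_eq0 eqr_nat.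
have := ler_distD s`_(f j1) (t j1) (t j2).
rewrite tj12 normrM (distrC _ (t j2)).
have := f_close j1; have := f_close j2; rewrite -f12.
have := ler_peMl (normr_ge0 h) dist_ge; have := ler_norm h; lra.
Qed.

Section Box.
Context {R : realType} {n : nat}.
Notation V := 'rV[R]_n.

Lemma mx_entry_norm_le {m p} (A : 'M[R]_(m, p)) i j : `|A i j| <= `|A|.
Proof. by rewrite [`|A|]mx_normrE; exact: (le_bigmax _ _ (i, j)). Qed.

Lemma mx_norm_le {m p} (A : 'M[R]_(m, p)) c :
  0 <= c -> (forall i j, `|A i j| <= c) -> `|A| <= c.
Proof. by move=> c0 Ac; rewrite [`|A|]mx_normrE; apply: bigmax_le => // -[i j]. Qed.

Lemma far_point_in_box (a b y : V) (i : 'I_n) (s : seq V) (del L : R) :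
  0 <= L -> L <= b ord0 i - a ord0 i -> 2 * del * (size s).+1%:R < L ->
  box a b y ->
  exists y', [/\ box a b y', `|y - y'| <= L & forall q, q \in s -> del <= `|y' - q|].
Proof.
move=> L0 Lab delL [ay yb].
set c := Num.max (a ord0 i) (y ord0 i - L).
have ac : a ord0 i <= c by rewrite le_max lexx.
have cy : c <= y ord0 i by rewrite ge_max ay /=; lra.
have yc : y ord0 i <= c + L by rewrite -lerBlDr le_max lexx orbT.
have cb : c + L <= b ord0 i.
  by rewrite -lerBrDr ge_max; apply/andP; split; have := yb i; lra.
set h := L / (size s).+1%:R.
have s0 : (0 : R) < (size s).+1%:R by rewrite ltr0n.
have h0 : 0 <= h by rewrite divr_ge0 // ltW.
have delh : 2 * del < h by rewrite ltr_pdivlMr.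
have [j js far] := @grid_point_far _ [seq q ord0 i | q : V <- s] c _ _ delh.
set t := c + j%:R * h in far.
have [ct tc] : c <= t /\ t <= c + L.
  split; first by rewrite lerDl mulr_ge0.
  rewrite lerD2l -[L](divfK (lt0r_neq0 s0)) -/h mulrC ler_wpM2l // ler_nat.
  by rewrite size_map in js; exact: leqW.
pose y' : V := \row_k if k == i then t else y ord0 k.
exists y'; split.
- split=> k; rewrite mxE; case: eqP => [->|_] //.
    exact: le_trans ac ct.
  exact: le_trans tc cb.
- apply: mx_norm_le => // i' k; rewrite (ord1 i') !mxE; case: eqP => [->|_].
    by rewrite ler_norml; apply/andP; split; lra.
  by rewrite subrr normr0.
- move=> q qs; have := far _ (map_f (fun q : V => q ord0 i) qs).
  have := mx_entry_norm_le (y' - q) ord0 i.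
  by rewrite !mxE eqxx => /[swap]; exact: le_trans.
Qed.

Lemma eventually_far_point_in_box {a b y : V} (i : 'I_n) (s : nat -> seq V)
    {r : nat -> R} {eps : R} :
  a ord0 i < b ord0 i -> 0 < eps -> box a b y ->
  (forall k, 2 * r k * (size (s k)).+1%:R <= k.+1%:R^-1) ->
  \forall k \near \oo, exists y',
    [/\ box a b y', `|y - y'| < eps & forall q, q \in s k -> r k <= `|y' - q|].
Proof.
move=> ab eps0 yab rs; pose L := Num.min (eps / 2) (b ord0 i - a ord0 i).
have L0 : 0 < L by rewrite lt_min divr_gt0 // subr_gt0.
have Leps : L < eps by rewrite gt_min; apply/orP; left; lra.
have Lab : L <= b ord0 i - a ord0 i by rewrite ge_min lexx orbT.
near=> k.
have [|y' [y'ab yy' far]] := @far_point_in_box a b y i (s k) (r k) L (ltW L0) Lab _ yab.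
  apply: le_lt_trans (rs k) _; near: k; exact: (near_infty_natSinv_lt (PosNum L0)).
by exists y'; split => //; exact: le_lt_trans Leps.
Unshelve. all: by end_near.
Qed.

End Box.

Lemma sub_count_lt (T : eqType) (a1 a2 : pred T) (s : seq T) x :
  subpred a1 a2 -> x \in s -> a2 x -> ~~ a1 x -> (count a1 s < count a2 s)%N.
Proof.
move=> sub12; elim: s => //= y s IH; rewrite inE => /orP[/eqP <-|xs] a2x a1x.
  by rewrite a2x (negbTE a1x) add0n add1n ltnS sub_count.
have := IH xs a2x a1x; have := sub12 y.
by case: (a1 y); case: (a2 y) => //=; lia.
Qed.

Section Preferences.
Context {R : realType} {n : nat}.
Notation V := 'rV[R]_n.
Implicit Types (X : set V) (P Q : set (V * V)).

Definition rank P (s : seq V) (p : V) : nat := count (fun q => `[< P (p, q) >]) s.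

Lemma rank_le {X P} s {p q} : preference X P -> P (p, q) -> (rank P s q <= rank P s p)%N.
Proof.
move=> [_ [_ trans]] pq; apply: sub_count => r /asboolP qr; apply/asboolP.
exact: trans pq qr.
Qed.

Lemma rank_lt {X P} s {p q} : preference X P -> X p -> X q -> q \in s ->
  ~ P (p, q) -> (rank P s p < rank P s q)%N.
Proof.
move=> [_ [total trans]] Xp Xq qs npq.
have qp : P (q, p) by case: (total p q Xp Xq).
apply: (@sub_count_lt _ _ _ _ q _ qs).
- by move=> r /asboolP pr; apply/asboolP; exact: trans qp pr.
- by apply/asboolP; case: (total q q Xq Xq).
- by apply/negP => /asboolP.
Qed.

Lemma rankP {X P} s {p q} : preference X P -> X p -> X q -> q \in s ->
  P (p, q) <-> (rank P s q <= rank P s p)%N.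
Proof.
move=> prefP Xp Xq qs; split=> [pq|le_qp]; first exact: (rank_le s prefP pq).
apply: contrapT => npq.
by have := rank_lt s prefP Xp Xq qs npq; rewrite ltnNge le_qp.
Qed.

Definition pref_of_utility X (u : V -> R) : set (V * V) :=
  [set pq | X pq.1 /\ X pq.2 /\ u pq.2 <= u pq.1].

Lemma pref_of_utility_continuous X u :
  continuous u -> continuous_preference X (pref_of_utility X u).
Proof.
move=> u_cont; split.
  split; first by move=> [p q] [Xp [Xq _]].
  split=> [x y Xx Xy|x y z [Xx [_ yx]] [_ [Xz zy]]].
    by case: (leP (u y) (u x)) => [|/ltW] ?; [left | right].
  by split; last split; last exact: le_trans yx.
have closed_le_u : closed [set pq : V * V | u pq.2 <= u pq.1].
  have -> : [set pq : V * V | u pq.2 <= u pq.1] =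
      (fun pq : V * V => u pq.1 - u pq.2) @^-1` [set r | 0 <= r].
    by apply/seteqP; split => pq /=; rewrite subr_ge0.
  apply: (continuous_closedP _).1; last exact: closed_ge.
  move=> pq; apply: (@continuousB R R^o _ (u \o fst) (u \o snd)).
    exact: continuous_comp cvg_fst (u_cont _).
  exact: continuous_comp cvg_snd (u_cont _).
move=> [p q] [cl [Xp Xq]]; split=> //; split=> //.
have : closure [set pq : V * V | u pq.2 <= u pq.1] (p, q).
  by apply: closureS cl => -[? ?] [_ []].
by rewrite -(closure_id _).1.
Qed.

(* Unqualified, [choice] denotes boolp.choice. *)
Lemma eq_choice P Q (A : set V) :
  (forall x y, A x -> A y -> P (x, y) <-> Q (x, y)) ->
  Defs.choice P A = Defs.choice Q A.
Proof.
move=> PQ; apply/seteqP; split=> x [Ax xA]; split=> // y Ay.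
  by apply/(PQ _ _ Ax Ay).1/xA.
by apply/(PQ _ _ Ax Ay).2/xA.
Qed.

Lemma Li_sub_Ls (S : set (V * V)) (F : nat -> set (V * V)) : Li S F `<=` Ls S F.
Proof.
move=> p [Sp Fp]; split=> // U pU N; have [M _ MF] := Fp U pU.
by exists (maxn N M); [exact: leq_maxl | exact/MF/leq_maxr].
Qed.

Lemma sub_Li_closed_converges (S : set (V * V)) (F : nat -> set (V * V)) :
  S `<=` Li S F -> closed_converges S F S.
Proof.
move=> SLi; split; apply/seteqP; split=> [p [] //|p /SLi] //.
exact: Li_sub_Ls.
Qed.

End Preferences.

Section Construction.
Context {R : realType} {n : nat}.
Notation V := 'rV[R]_n.
Variables (a b : V) (e : nat -> V * V) (Pstar : set (V * V)).

Definition exp_points (k : nat) : seq V :=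
  [seq (e i).1 | i <- iota 0 k] ++ [seq (e i).2 | i <- iota 0 k].

Lemma exp_pair_exp_points {k i z} : (i < k)%N -> exp_pair e i z -> z \in exp_points k.
Proof.
move=> ik [->|->]; rewrite mem_cat; apply/orP; [left | right];
  by apply: map_f; rewrite mem_iota.
Qed.

Lemma exp_pointsP k z : z \in exp_points k -> exists i, exp_pair e i z.
Proof. by rewrite mem_cat => /orP[] /mapP[i _ ->]; exists i; [left | right]. Qed.

Definition rank_utility (k : nat) (q : V) : R := (rank Pstar (exp_points k) q)%:R.

(* The second term makes the tents too thin to cover a fixed segment for
   large k. *)
Definition radius (k : nat) : R :=
  Num.min (sep_radius (exp_points k)) (k.+1%:R^-1 / (2 * (size (exp_points k)).+1%:R)).

Definition utility (k : nat) : V -> R :=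
  tent_max (rank_utility k) (radius k) (exp_points k).

Lemma radius_gt0 k : 0 < radius k.
Proof. by rewrite lt_min sep_radius_gt0 divr_gt0 ?invr_gt0 ?mulr_gt0 ?ltr0n. Qed.

Lemma radius_small k : 2 * radius k * (size (exp_points k)).+1%:R <= k.+1%:R^-1.
Proof.
rewrite (mulrC 2) -mulrA -ler_pdivlMr ?mulr_gt0 ?ltr0n //.
by rewrite /radius ge_min lexx orbT.
Qed.

Lemma utility_exp_points k p : p \in exp_points k -> utility k p = rank_utility k p.
Proof.
move=> pk; rewrite /utility.
apply: (@tent_max_at _ _ (rank_utility k) _ _ _ (radius_gt0 k) (ler0n _ _) pk).
by move=> q qk qp; rewrite /radius ge_min sep_radius_le.
Qed.

Hypothesis Pstar_pref : preference (box a b) Pstar.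
Hypothesis exp_in_box : forall i, exp_pair e i `<=` box a b.

Lemma exp_points_in_box {k z} : z \in exp_points k -> box a b z.
Proof. by move=> /exp_pointsP[i]; exact: exp_in_box. Qed.

Lemma utility_rationalizes k :
  strongly_rationalizes_order e k Pstar (pref_of_utility (box a b) (utility k)).
Proof.
move=> i ik; apply: eq_choice => x y.
move=> /(exp_pair_exp_points ik) xk /(exp_pair_exp_points ik) yk.
have [Xx Xy] := (exp_points_in_box xk, exp_points_in_box yk).
rewrite (rankP (exp_points k) Pstar_pref Xx Xy yk) /pref_of_utility /=.
rewrite !utility_exp_points // /rank_utility ler_nat.
by split=> [|[_ []]].
Qed.

Hypothesis ab : vgg b a.

Lemma sub_Li_utility_prefs :
  box a b `*` box a b `<=`
  Li (box a b `*` box a b) (fun k => pref_of_utility (box a b) (utility k)).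
Proof.
move=> [x y] [Xx Xy]; split=> // U /nbhs_ballP[eps /= eps0 epsU].
have [n0|n_gt0] := posnP n.
  have xy : x = y.
    by apply/rowP => i; suff : (i < 0)%N by []; rewrite -[X in (_ < X)%N]n0.
  subst y.
  apply: nearW => k; exists (x, x); split; first exact/epsU/ballxx.
  by split; last split.
have := eventually_far_point_in_box (Ordinal n_gt0) exp_points (ab _) eps0 Xy
  radius_small.
apply: filterS => k [y' [Xy' yy' far]]; exists (x, y'); split.
  by apply: epsU; split; [exact: ballxx | rewrite mx_norm_ball].
split=> //; split=> //=.
by rewrite /utility tent_max_far ?tent_max_ge0 //; exact: radius_gt0.
Qed.

End Construction.

Theorem proposition1 (R : realType) (n : nat) (a b : 'rV[R]_n)
  (e : nat -> 'rV[R]_n * 'rV[R]_n) (Pstar : set ('rV[R]_n * 'rV[R]_n)) :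
  vgg b a ->
  sequence_of_experiments (box a b) e ->
  continuous_preference (box a b) Pstar ->
  exists P : nat -> set ('rV[R]_n * 'rV[R]_n),
    (forall k, continuous_preference (box a b) (P k) /\
               strongly_rationalizes_order e k Pstar (P k)) /\
    closed_converges (box a b `*` box a b) P (box a b `*` box a b).
Proof.
move=> ab [exp_in_box _] [Pstar_pref _].
exists (fun k => pref_of_utility (box a b) (utility e Pstar k)); split.
  move=> k; split; last exact: utility_rationalizes.
  exact/pref_of_utility_continuous/tent_max_continuous.
exact/sub_Li_closed_converges/sub_Li_utility_prefs.
Qed.
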